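(* The set $\mathcal{B}_{2,4}$ consisting of the six identities (M1) $(xy)(zt)=(xz)(yt)$, (M2) $(xy)(zt)=(ty)(zx)$, (M3) $((xy)z)t=((xt)z)y$, (M4) $(x(yz))t=(x(tz))y$, (M5) $x((yz)t)=z((yx)t)$, (M6) $x(y(zt))=z(y(xt))$, together with $x(xy)=y$, is a basis for $\Sigma_{2,4}$.
   Context: $\Sigma_{2,4}$ is the set of groupoid identities satisfied in the integers $\mathbb{Z}$ by both binary operations $x-y$ and $-x-y$. A basis is a set of identities whose equational consequences are exactly $\Sigma_{2,4}$. *)

From Stdlib Require Import ZArith List.
Import ListNotations.
Open Scope Z_scope.

Inductive term : Type :=
| V : nat -> term
| M : term -> term -> term.

Definition identity := (term * term)%type.

Fixpoint subst (sg : nat -> term) (t : term) : term :=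
  match t with
  | V n => sg n
  | M a b => M (subst sg a) (subst sg b)
  end.

Fixpoint eval {T : Type} (op : T -> T -> T) (v : nat -> T) (t : term) : T :=
  match t with
  | V n => v n
  | M a b => op (eval op v a) (eval op v b)
  end.

Definition satisfies {T : Type} (op : T -> T -> T) (p : identity) : Prop :=
  forall v : nat -> T, eval op v (fst p) = eval op v (snd p).

Definition Sigma24 (p : identity) : Prop :=
  satisfies (fun x y : Z => x - y) p /\ satisfies (fun x y : Z => - x - y) p.

Inductive derivable (E : identity -> Prop) : term -> term -> Prop :=
| der_ax : forall (p : identity) (sg : nat -> term),
    E p -> derivable E (subst sg (fst p)) (subst sg (snd p))
| der_refl : forall t, derivable E t t
| der_sym : forall s t, derivable E s t -> derivable E t s
| der_trans : forall s t u, derivable E s t -> derivable E t u -> derivable E s u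
| der_cong : forall s1 t1 s2 t2,
    derivable E s1 t1 -> derivable E s2 t2 -> derivable E (M s1 s2) (M t1 t2).

Definition is_basis (E Th : identity -> Prop) : Prop :=
  forall s t : term, derivable E s t <-> Th (s, t).

Definition x := V 0.
Definition y := V 1.
Definition z := V 2.
Definition t := V 3.

Definition B24_list : list identity :=
  [ (M (M x y) (M z t), M (M x z) (M y t));
    (M (M x y) (M z t), M (M t y) (M z x));
    (M (M (M x y) z) t, M (M (M x t) z) y);
    (M (M x (M y z)) t, M (M x (M t z)) y);
    (M x (M (M y z) t), M z (M (M y x) t));
    (M x (M y (M z t)), M z (M y (M x t)));
    (M x (M x y), y) ]%list.

Definition B24 (p : identity) : Prop := In p B24_list.

(* Fix a point e in a groupoid satisfying x(xy) = y, (M1), (M2) and (M6). Then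
   x + y := (x(ee))(ey) is an abelian group with zero e, alpha x := x(ee) is an
   involutive automorphism of it, and xy = alpha x + ee - y. Hence every term
   evaluates to sum_n (p_n + q_n alpha) v_n + (p + q alpha)(ee) with integer
   coefficients computed from the term alone. Evaluating in Z under x - y
   (alpha = 1) and -x - y (alpha = -1) recovers p + q and p - q, so an identity
   of Sigma_{2,4} has equal coefficients on both sides and holds in every such
   groupoid, in particular in the term algebra modulo derivability. *)
From Stdlib Require Import ZArith Lia Setoid Morphisms.

(* [coef u n = (p, q)] and [const_coef u = (p, q)] are the coefficients of
   [v n] and of [ee] in the normal form above, [(p, q)] standing for [p + q alpha]. *)
Fixpoint coef (u : term) (n : nat) : Z * Z :=
  match u with
  | V m => if Nat.eqb m n then (1, 0)%Z else (0, 0)%Z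
  | M u1 u2 =>
      let (p1, q1) := coef u1 n in let (p2, q2) := coef u2 n in (q1 - p2, p1 - q2)%Z
  end.

Fixpoint const_coef (u : term) : Z * Z :=
  match u with
  | V _ => (0, 0)%Z
  | M u1 u2 =>
      let (p1, q1) := const_coef u1 in let (p2, q2) := const_coef u2 in
      (q1 - p2 + 1, p1 - q2)%Z
  end.

Fixpoint var_bound (u : term) : nat :=
  match u with V m => S m | M u1 u2 => Nat.max (var_bound u1) (var_bound u2) end.

Definition delta (n m : nat) : Z := if Nat.eqb m n then 1%Z else 0%Z.

Lemma eval_sub_delta u n :
  eval (fun a b : Z => a - b) (delta n) u = (fst (coef u n) + snd (coef u n))%Z.
Proof.
  induction u as [m|u1 IH1 u2 IH2]; simpl.
  - unfold delta. destruct (Nat.eqb m n); reflexivity.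
  - rewrite IH1, IH2. destruct (coef u1 n), (coef u2 n); simpl; lia.
Qed.

Lemma eval_negsub_delta u n :
  eval (fun a b : Z => - a - b) (delta n) u = (fst (coef u n) - snd (coef u n))%Z.
Proof.
  induction u as [m|u1 IH1 u2 IH2]; simpl.
  - unfold delta. destruct (Nat.eqb m n); reflexivity.
  - rewrite IH1, IH2. destruct (coef u1 n), (coef u2 n); simpl; lia.
Qed.

Lemma eval_sub_one u :
  eval (fun a b : Z => a - b) (fun _ => 1%Z) u
  = (1 - (fst (const_coef u) + snd (const_coef u)))%Z.
Proof.
  induction u as [m|u1 IH1 u2 IH2]; cbn [eval const_coef]; [reflexivity|].
  rewrite IH1, IH2. destruct (const_coef u1), (const_coef u2); cbn [fst snd]; lia.
Qed.

Lemma eval_negsub_one u :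
  eval (fun a b : Z => - a - b) (fun _ => 1%Z) u
  = (1 - 3 * (fst (const_coef u) - snd (const_coef u)))%Z.
Proof.
  induction u as [m|u1 IH1 u2 IH2]; cbn [eval const_coef]; [reflexivity|].
  rewrite IH1, IH2. destruct (const_coef u1), (const_coef u2); cbn [fst snd]; lia.
Qed.

Lemma Sigma24_coef_eq s u n : Sigma24 (s, u) -> coef s n = coef u n.
Proof.
  intros [Hsub Hneg]. specialize (Hsub (delta n)). specialize (Hneg (delta n)).
  cbn [fst snd] in Hsub, Hneg.
  rewrite !eval_sub_delta in Hsub. rewrite !eval_negsub_delta in Hneg.
  destruct (coef s n), (coef u n); cbn [fst snd] in *. f_equal; lia.
Qed.

Lemma Sigma24_const_coef_eq s u : Sigma24 (s, u) -> const_coef s = const_coef u.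
Proof.
  intros [Hsub Hneg]. specialize (Hsub (fun _ => 1%Z)). specialize (Hneg (fun _ => 1%Z)).
  cbn [fst snd] in Hsub, Hneg.
  rewrite !eval_sub_one in Hsub. rewrite !eval_negsub_one in Hneg.
  destruct (const_coef s), (const_coef u); cbn [fst snd] in *. f_equal; lia.
Qed.

Section AffineRepresentation.

Context {A : Type} (R : relation A) `{Equivalence A R}.
Context (mul : A -> A -> A) {mul_Proper : Proper (R ==> R ==> R) mul} (e : A).

Local Infix "==" := R (at level 70).
Local Notation "x ⋅ y" := (mul x y) (at level 40, left associativity).

Hypothesis mul_cancel : forall x y, x ⋅ (x ⋅ y) == y.
Hypothesis medial : forall x y z u, (x ⋅ y) ⋅ (z ⋅ u) == (x ⋅ z) ⋅ (y ⋅ u).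
Hypothesis paramedial : forall x y z u, (x ⋅ y) ⋅ (z ⋅ u) == (u ⋅ y) ⋅ (z ⋅ x).
Hypothesis outer_exchange : forall x y z u, x ⋅ (y ⋅ (z ⋅ u)) == z ⋅ (y ⋅ (x ⋅ u)).

Definition alpha x := x ⋅ (e ⋅ e).
Definition add x y := alpha x ⋅ (e ⋅ y).
Definition opp x := e ⋅ (alpha x ⋅ e).

#[local] Instance alpha_Proper : Proper (R ==> R) alpha.
Proof. unfold alpha; solve_proper. Qed.
#[local] Instance add_Proper : Proper (R ==> R ==> R) add.
Proof. unfold add; solve_proper. Qed.
#[local] Instance opp_Proper : Proper (R ==> R) opp.
Proof. unfold opp; solve_proper. Qed.

Lemma mul_square_involutive x w : (x ⋅ (w ⋅ w)) ⋅ (w ⋅ w) == x.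
Proof. rewrite paramedial, !mul_cancel. reflexivity. Qed.

Lemma mul_medial_expand p q r w : (p ⋅ q) ⋅ w == (p ⋅ r) ⋅ (q ⋅ (r ⋅ w)).
Proof. rewrite medial, mul_cancel. reflexivity. Qed.

Lemma alpha_involutive x : alpha (alpha x) == x.
Proof. apply mul_square_involutive. Qed.

Lemma alpha_zero : alpha e == e.
Proof. apply mul_cancel. Qed.

Lemma add_0_l x : add e x == x.
Proof. unfold add, alpha. rewrite !mul_cancel. reflexivity. Qed.

Lemma add_0_r x : add x e == x.
Proof. apply alpha_involutive. Qed.

Lemma add_comm x y : add x y == add y x.
Proof. apply paramedial. Qed.

Lemma add_opp_r x : add x (opp x) == e.
Proof. unfold add, opp. rewrite !mul_cancel. reflexivity. Qed.

Lemma alpha_add_unfold x y : alpha (add x y) == x ⋅ (e ⋅ alpha y).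
Proof.
  unfold add, alpha at 1.
  rewrite (mul_medial_expand (alpha x) (e ⋅ y) (e ⋅ e) (e ⋅ e)).
  unfold alpha at 1. rewrite mul_square_involutive, medial, mul_cancel. reflexivity.
Qed.

Lemma add_assoc x y z : add (add x y) z == add x (add y z).
Proof.
  unfold add at 1. rewrite alpha_add_unfold.
  rewrite (mul_medial_expand x (e ⋅ alpha y) (e ⋅ e) (e ⋅ z)).
  unfold add. apply mul_Proper; [reflexivity|].
  rewrite (mul_medial_expand e (alpha y) e ((e ⋅ e) ⋅ (e ⋅ z))).
  rewrite outer_exchange, mul_cancel. reflexivity.
Qed.

Lemma alpha_add x y : alpha (add x y) == add (alpha x) (alpha y).
Proof. rewrite alpha_add_unfold. unfold add at 1. rewrite alpha_involutive. reflexivity. Qed.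

Lemma mul_affine x y : x ⋅ y == add (alpha x) (add (e ⋅ e) (opp y)).
Proof.
  unfold add at 1. rewrite alpha_involutive. unfold add, opp.
  rewrite mul_cancel. unfold alpha at 1. rewrite paramedial, mul_cancel.
  unfold alpha. rewrite mul_square_involutive, mul_cancel. reflexivity.
Qed.

Lemma add_left_comm x y z : add x (add y z) == add y (add x z).
Proof. rewrite <- !add_assoc, (add_comm x y). reflexivity. Qed.

Lemma add_add_swap a b c d : add (add a b) (add c d) == add (add a c) (add b d).
Proof. rewrite !add_assoc, (add_left_comm b c). reflexivity. Qed.

Lemma add_cancel_l x y z : add x y == add x z -> y == z.
Proof.
  intro Hxyz. rewrite <- (add_0_l y), <- (add_0_l z), <- (add_opp_r x), (add_comm x).
  rewrite !add_assoc, Hxyz. reflexivity.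
Qed.

Lemma opp_unique x y : add x y == e -> y == opp x.
Proof. intro Hxy. apply (add_cancel_l x). rewrite Hxy, add_opp_r. reflexivity. Qed.

Lemma opp_add x y : opp (add x y) == add (opp x) (opp y).
Proof.
  symmetry. apply opp_unique.
  rewrite add_add_swap, !add_opp_r. apply add_0_l.
Qed.

Lemma opp_involutive x : opp (opp x) == x.
Proof. symmetry. apply opp_unique. rewrite add_comm. apply add_opp_r. Qed.

Lemma opp_zero : opp e == e.
Proof. symmetry. apply opp_unique. apply add_0_l. Qed.

Lemma alpha_opp x : alpha (opp x) == opp (alpha x).
Proof. apply opp_unique. rewrite <- alpha_add, add_opp_r. apply alpha_zero. Qed.

Fixpoint nmul (n : nat) (x : A) : A :=
  match n with O => e | S n => add x (nmul n x) end.

#[local] Instance nmul_Proper n : Proper (R ==> R) (nmul n).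
Proof. induction n; intros x1 x2 Hx; simpl; [reflexivity|]. apply add_Proper; auto. Qed.

Lemma nmul_add m n x : nmul (m + n) x == add (nmul m x) (nmul n x).
Proof. induction m; simpl; [rewrite add_0_l; reflexivity|]. rewrite IHm, add_assoc. reflexivity. Qed.

Lemma nmul_alpha n x : nmul n (alpha x) == alpha (nmul n x).
Proof. induction n; simpl; [rewrite alpha_zero; reflexivity|]. rewrite IHn, alpha_add. reflexivity. Qed.

Definition zmul (p : Z) (x : A) := add (nmul (Z.to_nat p) x) (opp (nmul (Z.to_nat (- p)) x)).

#[local] Instance zmul_Proper p : Proper (R ==> R) (zmul p).
Proof. unfold zmul. intros x1 x2 Hx. rewrite Hx. reflexivity. Qed.

Lemma zmul_sub_of_nat m n x :
  zmul (Z.of_nat m - Z.of_nat n) x == add (nmul m x) (opp (nmul n x)).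
Proof.
  unfold zmul. destruct (Nat.le_ge_cases n m) as [Hnm|Hmn].
  - replace (Z.to_nat (Z.of_nat m - Z.of_nat n)) with (m - n)%nat by lia.
    replace (Z.to_nat (- (Z.of_nat m - Z.of_nat n))) with 0%nat by lia.
    replace m with ((m - n) + n)%nat at 2 by lia.
    rewrite nmul_add. simpl. rewrite opp_zero, add_0_r, add_assoc, add_opp_r, add_0_r.
    reflexivity.
  - replace (Z.to_nat (Z.of_nat m - Z.of_nat n)) with 0%nat by lia.
    replace (Z.to_nat (- (Z.of_nat m - Z.of_nat n))) with (n - m)%nat by lia.
    replace n with ((n - m) + m)%nat at 2 by lia.
    rewrite nmul_add. simpl. rewrite add_0_l, opp_add, add_left_comm, add_opp_r, add_0_r.
    reflexivity.
Qed.

Lemma zmul_add p q x : zmul (p + q) x == add (zmul p x) (zmul q x).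
Proof.
  replace (p + q)%Z with (Z.of_nat (Z.to_nat p + Z.to_nat q)
                          - Z.of_nat (Z.to_nat (- p) + Z.to_nat (- q)))%Z by lia.
  rewrite zmul_sub_of_nat, !nmul_add, opp_add. apply add_add_swap.
Qed.

Lemma zmul_opp p x : zmul (- p) x == opp (zmul p x).
Proof.
  replace (- p)%Z with (Z.of_nat (Z.to_nat (- p)) - Z.of_nat (Z.to_nat p))%Z by lia.
  rewrite zmul_sub_of_nat. unfold zmul. rewrite opp_add, opp_involutive, add_comm.
  reflexivity.
Qed.

Lemma zmul_0 x : zmul 0 x == e.
Proof. unfold zmul. simpl. rewrite opp_zero, add_0_l. reflexivity. Qed.

Lemma zmul_1 x : zmul 1 x == x.
Proof. unfold zmul. simpl. rewrite opp_zero, !add_0_r. reflexivity. Qed.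

Lemma zmul_alpha p x : zmul p (alpha x) == alpha (zmul p x).
Proof. unfold zmul. rewrite !nmul_alpha, alpha_add, alpha_opp. reflexivity. Qed.

Definition scale (k : Z * Z) (x : A) := add (zmul (fst k) x) (zmul (snd k) (alpha x)).

Lemma scale_0 x : scale (0, 0)%Z x == e.
Proof. unfold scale; simpl. rewrite !zmul_0, add_0_l. reflexivity. Qed.

Lemma scale_1 x : scale (1, 0)%Z x == x.
Proof. unfold scale; simpl. rewrite zmul_0, zmul_1, add_0_r. reflexivity. Qed.

Lemma scale_alpha_sub p1 q1 p2 q2 x :
  scale (q1 - p2, p1 - q2)%Z x == add (alpha (scale (p1, q1) x)) (opp (scale (p2, q2) x)).
Proof.
  unfold scale; simpl. unfold Z.sub. rewrite !zmul_add, !zmul_opp.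
  rewrite alpha_add, !zmul_alpha, alpha_involutive, opp_add.
  rewrite (add_comm (alpha _) (zmul q1 x)), <- !zmul_alpha. apply add_add_swap.
Qed.

Lemma scale_alpha_sub_add p1 q1 p2 q2 x :
  scale (q1 - p2 + 1, p1 - q2)%Z x
  == add (alpha (scale (p1, q1) x)) (add x (opp (scale (p2, q2) x))).
Proof.
  rewrite add_left_comm, <- scale_alpha_sub. unfold scale; simpl.
  rewrite zmul_add, zmul_1, <- add_assoc, (add_comm x), add_assoc. reflexivity.
Qed.

Fixpoint sum (N : nat) (f : nat -> A) : A :=
  match N with O => e | S N => add (sum N f) (f N) end.

Lemma sum_ext N f g : (forall n, f n == g n) -> sum N f == sum N g.
Proof. intro Hfg. induction N; simpl; [reflexivity|]. rewrite IHN, Hfg. reflexivity. Qed.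

Lemma sum_add N f g : sum N (fun n => add (f n) (g n)) == add (sum N f) (sum N g).
Proof. induction N; simpl; [rewrite add_0_l; reflexivity|]. rewrite IHN. apply add_add_swap. Qed.

Lemma sum_alpha N f : sum N (fun n => alpha (f n)) == alpha (sum N f).
Proof. induction N; simpl; [rewrite alpha_zero; reflexivity|]. rewrite IHN, alpha_add. reflexivity. Qed.

Lemma sum_opp N f : sum N (fun n => opp (f n)) == opp (sum N f).
Proof. induction N; simpl; [rewrite opp_zero; reflexivity|]. rewrite IHN, opp_add. reflexivity. Qed.

Lemma sum_scale_var v m N :
  sum N (fun n => scale (coef (V m) n) (v n)) == if Nat.ltb m N then v m else e.
Proof.
  induction N; simpl; [reflexivity|]. simpl in IHN. rewrite IHN.
  destruct (Nat.eqb_spec m N) as [->|Hne].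
  - rewrite scale_1, Nat.ltb_irrefl.
    replace (Nat.ltb N (S N)) with true by (symmetry; apply Nat.ltb_lt; lia).
    apply add_0_l.
  - rewrite scale_0, add_0_r.
    destruct (Nat.ltb_spec m N), (Nat.ltb_spec m (S N)); try reflexivity; lia.
Qed.

Lemma eval_normal_form v u N : (var_bound u <= N)%nat ->
  eval mul v u == add (sum N (fun n => scale (coef u n) (v n))) (scale (const_coef u) (e ⋅ e)).
Proof.
  revert N; induction u as [m|u1 IH1 u2 IH2]; intros N HN; cbn [eval var_bound] in *.
  - rewrite sum_scale_var. replace (Nat.ltb m N) with true by (symmetry; apply Nat.ltb_lt; lia).
    simpl. rewrite scale_0, add_0_r. reflexivity.
  - rewrite (IH1 N), (IH2 N) by lia. rewrite mul_affine.
    rewrite (sum_ext N (fun n => scale (coef (M u1 u2) n) (v n))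
               (fun n => add (alpha (scale (coef u1 n) (v n))) (opp (scale (coef u2 n) (v n))))).
    2:{ intro n. simpl. destruct (coef u1 n), (coef u2 n). apply scale_alpha_sub. }
    rewrite sum_add, sum_alpha, sum_opp.
    simpl const_coef. destruct (const_coef u1), (const_coef u2).
    rewrite scale_alpha_sub_add, alpha_add, opp_add, !add_assoc.
    apply add_Proper; [reflexivity|]. rewrite (add_left_comm (opp _) (alpha _)).
    apply add_Proper; [reflexivity|]. apply add_left_comm.
Qed.

Theorem Sigma24_eval v s u : Sigma24 (s, u) -> eval mul v s == eval mul v u.
Proof.
  intro Hsu. set (N := Nat.max (var_bound s) (var_bound u)).
  rewrite (eval_normal_form v s N), (eval_normal_form v u N) by lia.
  rewrite (Sigma24_const_coef_eq _ _ Hsu).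
  apply add_Proper; [|reflexivity].
  apply sum_ext. intro n. rewrite (Sigma24_coef_eq _ _ n Hsu). reflexivity.
Qed.

End AffineRepresentation.

Lemma eval_subst {T} (op : T -> T -> T) v sg u :
  eval op v (subst sg u) = eval op (fun n => eval op v (sg n)) u.
Proof. induction u; simpl; congruence. Qed.

Lemma eval_V u : eval M V u = u.
Proof. induction u; simpl; congruence. Qed.

Lemma derivable_sound {T} (op : T -> T -> T) (E : identity -> Prop) s u :
  (forall p, E p -> satisfies op p) -> derivable E s u -> satisfies op (s, u).
Proof.
  intros HE D. unfold satisfies in *; cbn [fst snd] in *.
  induction D as [p sg Hp| | | |]; intro v; cbn [fst snd eval] in *.
  - rewrite !eval_subst. apply HE, Hp.
  - reflexivity.
  - congruence.
  - congruence.
  - congruence.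
Qed.

Lemma B24_Sigma24 p : B24 p -> Sigma24 p.
Proof.
  unfold B24, B24_list. simpl.
  intro Hp. split; intro v; repeat destruct Hp as [Hp|Hp]; try contradiction;
    subst p; cbn [fst snd eval x y z t]; lia.
Qed.

#[local] Instance derivable_Equivalence E : Equivalence (derivable E).
Proof. split; [exact (der_refl E) | exact (der_sym E) | exact (der_trans E)]. Qed.

#[local] Instance M_derivable_Proper E : Proper (derivable E ==> derivable E ==> derivable E) M.
Proof. intros ? ? H1 ? ? H2. apply der_cong; assumption. Qed.

Definition subst4 (a b c d : term) (n : nat) : term :=
  match n with 0 => a | 1 => b | 2 => c | 3 => d | _ => V n end%nat.

Theorem theorem3p1 : is_basis B24 Sigma24.
Proof.
  intros s u. split.
  - intro D. split; revert D; apply derivable_sound; intros p Hp; apply B24_Sigma24, Hp.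
  - intro Hsu. rewrite <- (eval_V s), <- (eval_V u).
    apply (Sigma24_eval (derivable B24) M (V 0)); [| | | | exact Hsu].
    + intros a b. exact (der_ax B24 (M x (M x y), y) (subst4 a b a a) ltac:(cbv; tauto)).
    + intros a b c d.
      exact (der_ax B24 (M (M x y) (M z t), M (M x z) (M y t)) (subst4 a b c d) ltac:(cbv; tauto)).
    + intros a b c d.
      exact (der_ax B24 (M (M x y) (M z t), M (M t y) (M z x)) (subst4 a b c d) ltac:(cbv; tauto)).
    + intros a b c d.
      exact (der_ax B24 (M x (M y (M z t)), M z (M y (M x t))) (subst4 a b c d) ltac:(cbv; tauto)).
Qed.
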